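(* Let $I$ be a conditional indicator w.r.t. $\mathcal{H}$ which is conditionally convex and whose domain $\mathbb{D}_I$ is $\mathcal{H}$-decomposable. Then $I$ is regular.
   Context: Let $(\Omega,\mathcal{F},\mathbb{P})$ be a probability space with $\mathcal{F}$ complete, and $\mathcal{H}\subseteq\mathcal{F}$ a complete sub-$\sigma$-algebra. $\overline{\mathbb{R}}=\mathbb{R}\cup\{\pm\infty\}$ with conventions $r\pm\infty=\pm\infty$, $\infty-\infty=0$, $\infty+\infty=\infty$, $0\times(\pm\infty)=0$; $\mathbb{L}^0(G,\mathcal{G})$ is the set of $\mathcal{G}$-measurable random variables a.s. valued in $G$. $\operatorname{ess\,sup}_{\mathcal{H}}(X)$ is the smallest $\mathcal{H}$-measurable random variable dominating $X$ a.s., $\operatorname{ess\,inf}_{\mathcal{H}}(X)=-\operatorname{ess\,sup}_{\mathcal{H}}(-X)$. A conditional indicator w.r.t. $\mathcal{H}$ is a map $I:\mathbb{D}_I\to\mathbb{L}^0(\overline{\mathbb{R}},\mathcal{H})$, $0\in\mathbb{D}_I\subseteq\mathbb{L}^0(\overline{\mathbb{R}},\mathcal{F})$, with $I(X)\in[\operatorname{ess\,inf}_{\mathcal{H}}(X),\operatorname{ess\,sup}_{\mathcal{H}}(X)]$ a.s. and $\mathbb{D}_I+\mathbb{L}^0(\overline{\mathbb{R}},\mathcal{H})\subseteq\mathbb{D}_I$. $I$ is conditionally convex if for every $\alpha\in\mathbb{L}^0([0,1],\mathcal{H})$, $\alpha\mathbb{D}_I+(1-\alpha)\mathbb{D}_I\subseteq\mathbb{D}_I$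 and $I(\alpha X+(1-\alpha)Y)\le\alpha I(X)+(1-\alpha)I(Y)$ for $X,Y\in\mathbb{D}_I$. $\mathbb{D}_I$ is $\mathcal{H}$-decomposable if $X1_H+Y1_{\Omega\setminus H}\in\mathbb{D}_I$ for $X,Y\in\mathbb{D}_I$, $H\in\mathcal{H}$. $I$ is regular if $\mathbb{D}_I$ is $\mathcal{H}$-decomposable and for $X,Y\in\mathbb{D}_I$, $H\in\mathcal{H}$, $X1_H=Y1_H$ implies $I(X)1_H=I(Y)1_H$. *)

From HB Require Import structures.
From mathcomp Require Import all_boot all_order all_algebra.
From mathcomp Require Import all_classical all_reals all_analysis.
From mathcomp Require Import measurable_realfun.
Import Order.TTheory GRing.Theory Num.Theory.
Set Implicit Arguments. Unset Strict Implicit. Unset Printing Implicit Defensive.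
Local Open Scope classical_set_scope.
Local Open Scope ring_scope.
Local Open Scope ereal_scope.

Section CondIndicator.
Context {d : measure_display} {T : measurableType d} {R : realType}.

Definition eadd (x y : \bar R) : \bar R :=
  match x, y with
  | +oo, -oo => 0
  | -oo, +oo => 0
  | _, _ => x + y
  end.

(* pointwise operations on random variables; multiplication is mathcomp's
   mule, for which 0 * (+-oo) = 0 as in the paper *)
Definition radd (X Y : T -> \bar R) : T -> \bar R := fun w => eadd (X w) (Y w).
Definition rmul (X Y : T -> \bar R) : T -> \bar R := fun w => X w * Y w.
Definition rind (A : set T) : T -> \bar R := fun w => (\1_A w)%:E.
Definition rcst (c : \bar R) : T -> \bar R := fun _ => c.
Definition ropp (X : T -> \bar R) : T -> \bar R := fun w => - X w.

Definition complete_prob (P : probability T R) :=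
  forall N, measurable N -> P N = 0%E -> forall A, A `<=` N -> measurable A.

Definition complete_sub_sigma (P : probability T R) (H : set (set T)) :=
  sigma_algebra setT H /\ (forall A, H A -> measurable A) /\
  (forall N, measurable N -> P N = 0%E -> H N).

Definition Hmeas (H : set (set T)) (X : T -> \bar R) :=
  forall B : set (\bar R), measurable B -> H (X @^-1` B).

Definition ale (P : probability T R) (X Y : T -> \bar R) :=
  {ae P, forall w, X w <= Y w}.
Definition aeq (P : probability T R) (X Y : T -> \bar R) :=
  {ae P, forall w, X w = Y w}.

Definition is_esssupH (P : probability T R) (H : set (set T)) (X S : T -> \bar R) :=
  Hmeas H S /\ ale P X S /\
  (forall S', Hmeas H S' -> ale P X S' -> ale P S S').
Definition is_essinfH (P : probability T R) (H : set (set T)) (X s : T -> \bar R) :=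
  is_esssupH P H (ropp X) (ropp s).

(* Elements of L^0 are a.s.-equivalence classes; we represent them by
   functions and require D and I to be compatible with a.s. equality. *)
Definition L0_compatible (P : probability T R)
  (D : set (T -> \bar R)) (I : (T -> \bar R) -> T -> \bar R) :=
  (forall X Y, D X -> measurable_fun setT Y -> aeq P X Y -> D Y) /\
  (forall X Y, D X -> D Y -> aeq P X Y -> aeq P (I X) (I Y)).

Definition cond_indicator (P : probability T R) (H : set (set T))
  (D : set (T -> \bar R)) (I : (T -> \bar R) -> T -> \bar R) :=
  L0_compatible P D I /\
  D (rcst 0) /\
  (forall X, D X -> measurable_fun setT X) /\
  (forall X, D X -> Hmeas H (I X)) /\
  (forall X, D X -> forall S s, is_esssupH P H X S -> is_essinfH P H X s ->
     ale P s (I X) /\ ale P (I X) S) /\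
  (forall X Z, D X -> Hmeas H Z -> D (radd X Z)).

Definition convcomb (a X Y : T -> \bar R) : T -> \bar R :=
  radd (rmul a X) (rmul (fun w => 1 - a w) Y).

Definition cond_convex (P : probability T R) (H : set (set T))
  (D : set (T -> \bar R)) (I : (T -> \bar R) -> T -> \bar R) :=
  forall a : T -> \bar R, Hmeas H a -> {ae P, forall w, 0 <= a w <= 1} ->
  forall X Y, D X -> D Y ->
    D (convcomb a X Y) /\ ale P (I (convcomb a X Y)) (convcomb a (I X) (I Y)).

Definition H_decomposable (H : set (set T)) (D : set (T -> \bar R)) :=
  forall X Y A, D X -> D Y -> H A ->
    D (radd (rmul X (rind A)) (rmul Y (rind (~` A)))).

Definition regular (P : probability T R) (H : set (set T))
  (D : set (T -> \bar R)) (I : (T -> \bar R) -> T -> \bar R) :=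
  H_decomposable H D /\
  (forall X Y A, D X -> D Y -> H A ->
     aeq P (rmul X (rind A)) (rmul Y (rind A)) ->
     aeq P (rmul (I X) (rind A)) (rmul (I Y) (rind A))).

End CondIndicator.

From HB Require Import structures.
From mathcomp Require Import all_boot all_order all_algebra.
From mathcomp Require Import all_classical all_reals all_analysis.
From mathcomp Require Import measurable_realfun.
Import Order.TTheory GRing.Theory Num.Theory.
Set Implicit Arguments. Unset Strict Implicit. Unset Printing Implicit Defensive.
Local Open Scope classical_set_scope.
Local Open Scope ring_scope.
Local Open Scope ereal_scope.

(* Suppose X = Y a.s. on A in H.  The convex combination with the H-measurable
   weight 1_A, namely Z = 1_A X + 1_(~A) Y, equals Y a.s., so
   I(Y) = I(Z) <= 1_A I(X) + 1_(~A) I(Y), i.e. I(Y) <= I(X) a.s. on A.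
   Exchanging X and Y gives equality on A. *)

Section CondIndicatorRegular.
Context {d : measure_display} {T : measurableType d} {R : realType}.
Implicit Types (P : probability T R) (H : set (set T)) (A : set T)
  (X Y : T -> \bar R).

Lemma Hmeas_rind H A : sigma_algebra setT H -> H A -> Hmeas (R:=R) H (rind A).
Proof.
move=> [H0 HC _] HA B _.
have HT : H setT by have := HC _ H0; rewrite setD0.
have HnA : H (~` A) by have := HC _ HA; rewrite setTD.
rewrite (_ : rind A @^-1` B = (\1_A : T -> R) @^-1` (EFin @^-1` B)) //.
by rewrite preimage_indic; do 2 case: ifP.
Qed.

Lemma rind_ae_bounds P A : {ae P, forall w, 0 <= rind (R:=R) A w <= 1}.
Proof.
by apply: aeW => w; rewrite /rind indicE; case: (w \in A); rewrite /= ?lexx ?lee01.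
Qed.

Lemma convcomb_rind A X Y w :
  convcomb (rind A) X Y w = if w \in A then X w else Y w.
Proof.
rewrite /convcomb /radd /rmul /rind indicE; case: (w \in A) => /=.
  by rewrite mul1e subee // mul0e; case: (X w) => [r| |] //=; rewrite adde0.
by rewrite mul0e sube0 mul1e; case: (Y w) => [r| |] //=; rewrite add0e.
Qed.

Lemma aeq_rmul_rindP P A X Y :
  aeq P (rmul X (rind A)) (rmul Y (rind A)) <->
  X = Y %[ae P in A].
Proof.
split; apply: filterS => w; rewrite /rmul /rind indicE.
  by move=> + /mem_set Aw; rewrite Aw !mule1.
by case: (boolP (w \in A)) => [/set_mem Aw /(_ Aw) ->|_ _] //=; rewrite !mule0.
Qed.

Lemma convcomb_rind_aeq P A X Y :
  X = Y %[ae P in A] -> aeq P (convcomb (rind A) X Y) Y.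
Proof.
apply: filterS => w XY; rewrite convcomb_rind.
by case: (boolP (w \in A)) => // /set_mem /XY.
Qed.

Lemma cond_convex_le_on P H D I A X Y :
  sigma_algebra setT H -> L0_compatible P D I -> cond_convex P H D I ->
  D X -> D Y -> H A -> X = Y %[ae P in A] ->
  {ae P, forall w, A w -> I Y w <= I X w}.
Proof.
move=> Hsig [_ I_aeq] Iconv DX DY HA XY.
have [DZ IZ_le] := Iconv _ (Hmeas_rind Hsig HA) (rind_ae_bounds P A) X Y DX DY.
have IZ_IY := I_aeq _ _ DZ DY (convcomb_rind_aeq XY).
apply: filterS2 IZ_IY IZ_le => w <- + Aw.
by rewrite convcomb_rind mem_set.
Qed.

End CondIndicatorRegular.

Theorem mainTheorem7 (d : measure_display) (T : measurableType d) (R : realType)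
  (P : probability T R) (H : set (set T))
  (D : set (T -> \bar R)) (I : (T -> \bar R) -> T -> \bar R) :
  complete_prob P -> complete_sub_sigma P H ->
  cond_indicator P H D I -> cond_convex P H D I -> H_decomposable H D ->
  regular P H D I.
Proof.
move=> _ [Hsig _] [I_L0 _] Iconv Ddec; split=> // X Y A DX DY HA.
move=> /aeq_rmul_rindP XY; apply/aeq_rmul_rindP.
have IYX := cond_convex_le_on Hsig I_L0 Iconv DX DY HA XY.
have IXY := cond_convex_le_on Hsig I_L0 Iconv DY DX HA (ae_eq_sym XY).
rewrite /ae_eq; apply: filterS2 IYX IXY => w IYX IXY Aw.
by apply: le_anti; rewrite IXY ?IYX.
Qed.
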